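(* There is an absolute constant $C>0$ such that the following holds. Let $(X,\mu)$ be a measure space and let $E_0 \subset E_1 \subset \dots \subset E_N$ be measurable subsets of $X$ with $N \ge 2$. If $1/N \le \varepsilon \le 1/2$, then there exist integers $0 \le n < m \le N$ with $m - n \ge \varepsilon N$ such that $\mu(E_m \setminus E_n) \le C\varepsilon\,\mu(E_N)$. *)

From HB Require Import structures.
From mathcomp Require Import all_boot all_order all_algebra.
From mathcomp Require Import all_classical all_reals all_analysis.

From HB Require Import structures.
From mathcomp Require Import all_boot all_order all_algebra.
From mathcomp Require Import all_classical all_reals all_analysis.
From mathcomp Require Import lra.
Import Order.TTheory GRing.Theory Num.Theory.
Local Open Scope classical_set_scope.
Local Open Scope ring_scope.

(** Cut the chain into [K = N %/ L] consecutive blocks of length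
    [L = floor (eps N) + 1], so that [eps N < L <= 2 eps N].  The block
    increments are disjoint pieces of [E N], hence the smallest one has measure
    at most [mu (E N) / K], and [N < (K + 1) L <= 2 K L] gives
    [1 / K <= 2 L / N <= 4 eps]. *)

Lemma chain_subset {T : Type} {N : nat} {E : nat -> set T} :
    (forall i, (i < N)%N -> E i `<=` E i.+1) ->
  forall i j, (i <= j)%N -> (j <= N)%N -> E i `<=` E j.
Proof.
move=> incE i j.
elim: j => [|j IH]; first by rewrite leqn0 => /eqP -> _.
move=> + jN; rewrite leq_eqVlt => /orP[/eqP -> //|ij].
exact: subset_trans (IH ij (ltnW jN)) (incE j jN).
Qed.

Section IncreasingChain.
Context {d} {T : measurableType d} {R : realType} (mu : {measure set T -> \bar R}).
Context {N : nat} {E : nat -> set T}.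
Hypothesis mE : forall i, (i <= N)%N -> measurable (E i).
Hypothesis incE : forall i, (i < N)%N -> E i `<=` E i.+1.

Lemma sum_measure_increments_le K :
  (K <= N)%N -> (\sum_(k < K) mu (E k.+1 `\` E k) <= mu (E K))%E.
Proof.
elim: K => [|K IH] KN; first by rewrite big_ord0 measure_ge0.
have sub := incE K KN.
rewrite big_ord_recr /= -(setDUK sub) measureU //=; last 3 first.
- exact: mE K (ltnW KN).
- exact: measurableD (mE _ KN) (mE _ (ltnW KN)).
- exact: setDIK.
by rewrite setDUK // leeD2r // IH // ltnW.
Qed.

Lemma exists_small_increment : (0 < N)%N ->
  exists2 j, (j < N)%N & (mu (E j.+1 `\` E j) <= (N%:R^-1)%:E * mu (E N))%E.
Proof.
move=> N0; set a := fun k => mu (E k.+1 `\` E k).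
case: (@arg_minP _ _ _ (Ordinal N0) predT (a \o val)) => //= j _ jmin.
exists j => //; rewrite lee_pdivlMl ?ltr0n // mule_natl.
apply: le_trans _ (sum_measure_increments_le _ (leqnn N)).
have -> : (a j *+ N = \sum_(k < N) a j)%E by rewrite sumr_const card_ord.
exact: lee_sum.
Qed.

End IncreasingChain.

Lemma exists_small_block {d} {T : measurableType d} {R : realType}
    (mu : {measure set T -> \bar R}) {N : nat} {E : nat -> set T} {L : nat} :
  (forall i, (i <= N)%N -> measurable (E i)) ->
  (forall i, (i < N)%N -> E i `<=` E i.+1) ->
  (0 < L <= N)%N ->
  exists2 j, (j.+1 * L <= N)%N &
    (mu (E (j.+1 * L)%N `\` E (j * L)%N) <= ((N %/ L)%:R^-1)%:E * mu (E N))%E.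
Proof.
move=> mE incE /andP[L0 LN]; set K := (N %/ L)%N.
have K0 : (0 < K)%N by rewrite divn_gt0.
have blockN k : (k <= K)%N -> (k * L <= N)%N.
  by move=> kK; apply: leq_trans (leq_divM N L); rewrite leq_mul2r kK orbT.
have mF k : (k <= K)%N -> measurable (E (k * L)).
  by move=> kK; apply: mE; apply: blockN.
have incF k : (k < K)%N -> E (k * L) `<=` E (k.+1 * L).
  move=> kK; apply: (chain_subset incE) (blockN _ kK).
  by rewrite leq_mul2r leqnSn orbT.
have [j jK small] := exists_small_increment mu mF incF K0.
exists j; first exact: blockN.
apply: le_trans small _; apply: lee_wpmul2l; first by rewrite lee_fin invr_ge0.
apply: le_measure; rewrite ?inE; [exact: mF | exact: mE |].
exact: (chain_subset incE) (blockN _ (leqnn K)) (leqnn N).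
Qed.

Lemma inv_divn_le (R : numFieldType) {N L : nat} :
  (0 < L <= N)%N -> ((N %/ L)%:R^-1 : R) <= 2 * L%:R / N%:R.
Proof.
move=> /andP[L0 LN]; set K := (N %/ L)%N.
have K0 : (0 < K)%N by rewrite divn_gt0.
have N_le : (N <= K * (2 * L))%N.
  rewrite mulnCA mulnA ltnW // (leq_trans (ltn_ceil N L0)) // leq_mul2r.
  by rewrite -addn1 mul2n -addnn leq_add2l K0 orbT.
rewrite ler_pdivlMr ?ltr0n ?(leq_trans L0) // mulrC ler_pdivrMr ?ltr0n //.
by rewrite -!natrM ler_nat mulnC.
Qed.

Lemma truncnS_le_double {R : archiFieldType} {x : R} :
  1 <= x -> (Num.Def.trunc x).+1%:R <= 2 * x.
Proof.
move=> x1; have /andP[le_x _] := truncn_itv (le_trans ler01 x1).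
by rewrite -addn1 natrD; lra.
Qed.

Theorem lemma1p12 :
  exists C : rat, 0 < C /\
  forall (d : measure_display) (T : measurableType d) (R : realType)
    (mu : {measure set T -> \bar R}) (N : nat) (E : nat -> set T),
    (forall i, (i <= N)%N -> measurable (E i)) ->
    (forall i, (i < N)%N -> E i `<=` E i.+1) ->
    (2 <= N)%N ->
    forall eps : R, (N%:R)^-1 <= eps -> eps <= 2^-1 ->
    exists n m : nat, [/\ (n < m)%N, (m <= N)%N,
      eps * N%:R <= (m - n)%:R &
      (mu (E m `\` E n) <= ((ratr C * eps)%:E * mu (E N)))%E].
Proof.
exists 4%:R; split => // d T R mu N E mE incE N2 eps Neps eps2.
have N0 : (0 : R) < N%:R by rewrite ltr0n (leq_trans _ N2).
set L := (Num.Def.trunc (eps * N%:R)).+1.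
have epsN1 : 1 <= eps * N%:R by rewrite -ler_pdivrMr // mul1r.
have L_le : L%:R <= 2 * (eps * N%:R) := truncnS_le_double epsN1.
have L_N : (0 < L <= N)%N by rewrite /= -(ler_nat R); nra.
have [j jL_N small] := exists_small_block mu mE incE L_N.
exists (j * L)%N, (j.+1 * L)%N; split => //.
- by rewrite ltn_pmul2r.
- by rewrite -mulnBl subSnn mul1n ltW // truncnS_gt.
apply: le_trans small _; apply: lee_wpmul2r; first exact: measure_ge0.
rewrite rmorph_nat lee_fin.
apply: le_trans (inv_divn_le R L_N) _.
rewrite ler_pdivrMr //; nra.
Qed.
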